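(* Let $l\ge0$ and suppose $\tau\in S_n$ has at least $l+1$ runs. Then $$\sum_{\substack{Pr\in\mathcal{P}ref_n\\ \operatorname{diagword}(Pr)=\tau\\ l(Pr)=l}} t^{\operatorname{area}(Pr)}q^{\operatorname{dinv}(Pr)}Q_{\operatorname{ides}(Pr)} = \Bigg(\sum_{\substack{Pr\in\mathcal{P}ref_n\\ \operatorname{diagword}(Pr)=\tau\\ l(Pr)=l}} t^{\operatorname{area}(Pr)}q^{\operatorname{dinv}(Pr)}\Bigg)\cdot\frac{\sum_{\pi\in\operatorname{Yconsec}(\tau)}q^{\operatorname{inv}(\pi)}Q_{\operatorname{ides}(\tau)\cup\operatorname{ides}(\pi)}}{\sum_{\pi\in\operatorname{Yconsec}(\tau)}q^{\operatorname{inv}(\pi)}}.$$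
   Context: Runs of a permutation are its maximal increasing contiguous segments. A preference function on $n$ cars is a map $f:[n]\to[n]$; $\mathcal{P}ref_n$ is the set of them. It is drawn as a labeled lattice path in the $n\times n$ grid: for $j=1,\dots,n$ in turn, the cars in $f^{-1}(j)$ are written in column $j$ in increasing order bottom to top in the lowest unused rows. A car in the cell with lower-left corner $(x,y)$ lies in diagonal $y-x$. The deviation $l(Pr)$ is the maximum over cars of minus their diagonal (always $\ge0$). $\operatorname{area}(Pr)=\sum_c(d(c)+l(Pr))$, $d(c)$ the diagonal of car $c$. $\operatorname{dinv}(Pr)$ = (number of pairs of cars in the same diagonal with the left one smaller) + (number of pairs $b<a$ with $a$ in diagonal $m+1$, $b$ in diagonal $m$, and $b$ in a column strictly right of $a$) + (number of cars in negative diagonals). $\operatorname{diagword}(Pr)$ lists the cars of each nonempty diagonal in increasing order, diagonals from highest to lowest. The word $\sigma(Pr)$ reads the cars from highest to lowest diagonal and, within a diagonal, from right to left. For a permutation $\sigma\in S_n$ in one-line notation, $\operatorname{ides}(\sigma)=\{i\in[n-1]: i+1 \text{ appears to the left of } i \text{ in } \sigma\}$, and $\operatorname{ides}(Pr)=\operatorname{ides}(\sigma(Pr))$; $\operatorname{inv}(\pi)=\#\{i<j:\pi_i>\pi_j\}$. The consecutive blocks of $\tau$ are the parts of the set partition of $[n]$ in which $i$ and $i+1$ are in the same part iff $i$ appears immediately to the left of $i+1$ in $\tau$; $\operatorname{Yconsec}(\tau)\subseteq S_n$ is the Young subgroup of permutations of $[n]$ mapping each consecutive block of $\tau$ to itself.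 For $S\subseteq[n-1]$, $Q_S=\sum x_{a_1}\cdots x_{a_n}$, summed over $a_1\le\dots\le a_n$ (positive integers) with $a_i<a_{i+1}$ whenever $i\in S$ (Gessel's fundamental quasisymmetric function). *)

From HB Require Import structures.
From mathcomp Require Import all_boot all_order all_algebra all_fingroup.
Set Implicit Arguments. Unset Strict Implicit. Unset Printing Implicit Defensive.
Import GRing.Theory.

(* Conventions: cars 1..n are represented by c : 'I_n (car label = val c + 1);
   a preference function f : [n] -> [n] is f : {ffun 'I_n -> 'I_n}
   (car c+1 prefers column val (f c) + 1). *)

Definition col n (f : {ffun 'I_n -> 'I_n}) (c : 'I_n) : nat := val (f c).

(* 0-based row y of the cell of car c: cars of earlier columns fill the lowest
   rows, then within the column, smaller cars lie lower. *)
Definition row n (f : {ffun 'I_n -> 'I_n}) (c : 'I_n) : nat :=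
  #|[set c' : 'I_n | val (f c') < val (f c)]|
  + #|[set c' : 'I_n | (f c' == f c) && (val c' < val c)]|.

Definition diag n (f : {ffun 'I_n -> 'I_n}) (c : 'I_n) : int :=
  ((row f c)%:Z - (col f c)%:Z)%R.

(* deviation l(Pr) = max over cars of -(diagonal)  (always >= 0) *)
Definition dev n (f : {ffun 'I_n -> 'I_n}) : nat :=
  \max_(c : 'I_n) (col f c - row f c).

(* area = sum_c (d(c) + l); each summand is >= 0 so truncated subtraction is exact *)
Definition area n (f : {ffun 'I_n -> 'I_n}) : nat :=
  \sum_(c : 'I_n) (row f c + dev f - col f c).

Definition dinv n (f : {ffun 'I_n -> 'I_n}) : nat :=
  #|[set p : 'I_n * 'I_n |
       [&& diag f p.1 == diag f p.2, col f p.1 < col f p.2 & val p.1 < val p.2]]|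
  + #|[set p : 'I_n * 'I_n |
       [&& val p.2 < val p.1, diag f p.1 == (diag f p.2 + 1)%R
         & col f p.1 < col f p.2]]|
  + #|[set c : 'I_n | (diag f c < 0)%R]|.

Definition diaglist (n : nat) : seq int := [seq (n%:Z - k%:Z)%R | k <- iota 0 (2 * n).+1].

Definition diagword n (f : {ffun 'I_n -> 'I_n}) : seq 'I_n :=
  flatten [seq [seq c <- enum 'I_n | diag f c == d] | d <- diaglist n].

(* sigma(Pr): diagonals high to low, within a diagonal right to left *)
Definition sigword n (f : {ffun 'I_n -> 'I_n}) : seq 'I_n :=
  flatten [seq sort (fun a b => col f b <= col f a) [seq c <- enum 'I_n | diag f c == d]
          | d <- diaglist n].

Definition labels n (w : seq 'I_n) : seq nat := [seq (val c).+1 | c <- w].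

Definition oneline n (s : 'S_n) : seq 'I_n := [seq s i | i <- enum 'I_n].

Definition ides (w : seq nat) : seq nat :=
  [seq i <- iota 1 (size w).-1 | index i.+1 w < index i w].

Definition nruns (w : seq nat) : nat :=
  count (fun i => (i == 0) || (nth 0 w i < nth 0 w i.-1)) (iota 0 (size w)).

Definition consec (w : seq nat) (i : nat) : bool := index i.+1 w == (index i w).+1.

Definition sameblock (w : seq nat) (i j : nat) : bool :=
  all (consec w) (iota (minn i j) (maxn i j - minn i j)).

Definition Yconsec n (tau : 'S_n) : {set 'S_n} :=
  [set p : 'S_n | [forall c : 'I_n,
     sameblock (labels (oneline tau)) (val c).+1 (val (p c)).+1]].

Definition invnum n (p : 'S_n) : nat :=
  #|[set ij : 'I_n * 'I_n | (val ij.1 < val ij.2) && (val (p ij.2) < val (p ij.1))]|.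

Definition Qadm (n N : nat) (S : seq nat) (a : n.-tuple 'I_N) : bool :=
  all (fun i => let u := nth 0 (map val a) i.-1 in
                let v := nth 0 (map val a) i in
                if i \in S then u < v else u <= v) (iota 1 n.-1).

(* Gessel's fundamental quasisymmetric function Q_S (degree n), evaluated at the
   truncation x_1,...,x_N (x_i = 0 for i > N); S is a set of indices in [n-1]. *)
Definition Qeval (F : comNzRingType) (n N : nat) (S : seq nat) (x : 'I_N -> F) : F :=
  (\sum_(a : n.-tuple 'I_N | Qadm S a) \prod_(i <- a) x i)%R.

(** Let G be the Young subgroup of the consecutive blocks of tau. The cars of a
    consecutive block of tau lie in a common diagonal, in distinct columns, so G
    acts on the preference functions with diagword tau by relabelling cars,
    f |-> f \o s, preserving diagword, deviation and area.  Every orbit contains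
    exactly one canonical function, in which larger cars of a block lie further
    left (bubble-sort adjacent cars of a block to reach it).  Relabelling a
    canonical h by s adds inv(s) to dinv, and its reading word has inverse
    descent set ides(tau) U ides(s^-1).  Summing over orbits, both sides of the
    identity factor through the sum of t^area q^dinv over canonical functions. *)

From HB Require Import structures.
From mathcomp Require Import all_boot all_order all_algebra all_fingroup zify.
Set Implicit Arguments. Unset Strict Implicit. Unset Printing Implicit Defensive.
Import GRing.Theory.

Lemma val_ordE n (i : 'I_n) : val i = nat_of_ord i. Proof. by []. Qed.

(* [lia] sees [val i] and its coercion [nat_of_ord i] as distinct atoms. *)
Ltac ord_lia :=
  repeat match goal with H : context [@isSub.val_subdef _ _ _ _ _] |- _ =>
    rewrite val_ordE in H end;
  rewrite ?val_ordE; lia.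

Lemma ltn_sum_ord (I : finType) (F G : I -> nat) a :
  (forall c, F c <= G c) -> F a < G a -> \sum_c F c < \sum_c G c.
Proof.
move=> le_FG lt_a; rewrite (bigD1 a) //= [X in _ < X](bigD1 a) //=.
by rewrite -addSn leq_add // leq_sum.
Qed.

Lemma index_flatten_ltn (T K : eqType) (L : seq K) (ch : K -> seq T) (key : T -> K) x y :
  (forall d z, (z \in ch d) = (key z == d)) -> key x \in L -> key y \in L ->
  (index x (flatten (map ch L)) < index y (flatten (map ch L))) =
  (index (key x) L < index (key y) L) ||
  ((key x == key y) && (index x (ch (key x)) < index y (ch (key x)))).
Proof.
move=> mem_ch; elim: L => [//|d L IH] /=; rewrite !inE.
have := mem_ch (key x) x; rewrite eqxx -index_mem => hx.
have := mem_ch (key y) y; rewrite eqxx -index_mem => hy.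
rewrite !index_cat !mem_ch.
case: (eqVneq (key x) d) => [ex|nx]; case: (eqVneq (key y) d) => [ey|ny] /= Lx Ly.
- by rewrite ex ey eqxx.
- by move: hx; rewrite ex; lia.
- by rewrite ey (negPf nx); apply/negbTE; move: hy; rewrite ey; lia.
- by rewrite ltn_add2l ltnS IH.
Qed.

Lemma sorted_index_ltn (T : eqType) (r : rel T) s x y :
  {in s & &, transitive r} -> sorted r s -> x \in s -> y \in s -> x != y ->
  (r x y -> ~~ r y x) ->
  (index x s < index y s) = r x y.
Proof.
move=> tr so xs ys nxy asym; apply/idP/idP => [|rxy].
  exact: (sorted_ltn_index_in tr so x y xs ys).
case: (ltngtP (index x s) (index y s)) => // lt_yx.
  by have := sorted_ltn_index_in tr so y x ys xs lt_yx; move/negP: (asym rxy).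
by move: nxy; rewrite -(nth_index x xs) lt_yx (nth_index x ys) eqxx.
Qed.

Lemma index_iota0 m k : k < m -> index k (iota 0 m) = k.
Proof.
move=> lt_km; have := @index_uniq _ 0 k (iota 0 m).
by rewrite size_iota nth_iota // add0n; apply=> //; exact: iota_uniq.
Qed.

Lemma index_labels n (s : seq 'I_n) c : index (val c).+1 (labels s) = index c s.
Proof. by rewrite /labels (@index_map _ _ (fun c : 'I_n => (val c).+1)) // => u v [/val_inj]. Qed.

Lemma index_oneline n (p : 'S_n) c : index c (oneline p) = val ((p^-1)%g c).
Proof. by rewrite -{1}(permKV p c) /oneline index_map ?index_enum_ord //; exact: perm_inj. Qed.

Lemma size_oneline n (p : 'S_n) : size (oneline p) = n.
Proof. by rewrite size_map size_enum_ord. Qed.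

Lemma oneline_uniq n (p : 'S_n) : uniq (oneline p).
Proof. by rewrite map_inj_uniq ?enum_uniq //; apply: perm_inj. Qed.

Lemma mem_oneline n (p : 'S_n) c : c \in oneline p.
Proof. by apply/mapP; exists ((p^-1)%g c); rewrite ?mem_enum ?permKV. Qed.

Lemma mem_ides (w : seq nat) i :
  (i \in ides w) = (0 < i < size w) && (index i.+1 w < index i w).
Proof. by rewrite /ides mem_filter mem_iota andbC; congr (_ && _); apply/idP/idP; lia. Qed.

Lemma mem_ides_labels n (s : seq 'I_n) (a b : 'I_n) : size s = n -> val b = (val a).+1 ->
  (val b \in ides (labels s)) = (index b s < index a s).
Proof.
move=> size_s eb; rewrite mem_ides size_map size_s (index_labels s b) eb (index_labels s a).
by rewrite -eb ltn_ord eb.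
Qed.

Lemma eq_Qeval (R : comNzRingType) m N S S' (x : 'I_N -> R) :
  (forall i, 0 < i < m -> (i \in S) = (i \in S')) -> Qeval m S x = Qeval m S' x.
Proof.
move=> eqS; apply: eq_bigl => a; apply: eq_in_all => i.
by rewrite mem_iota => hi /=; rewrite eqS //; lia.
Qed.

Lemma tperm_succ_ltn n (a b x y : 'I_n) : val b = (val a).+1 -> val x < val y ->
  ~~ ((x == a) && (y == b)) -> val (tperm a b x) < val (tperm a b y).
Proof.
move=> eb lt_xy nab.
have ne_val (u v : 'I_n) : u != v -> val u != val v by [].
case: tpermP => [ex|ex|/eqP/ne_val nxa /eqP/ne_val nxb];
  case: tpermP => [ey|ey|/eqP/ne_val nya /eqP/ne_val nyb];
  rewrite ?ex ?ey ?eqxx /= in lt_xy nab *; ord_lia.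
Qed.

Lemma exists_ascent (F : nat -> nat) c d :
  c <= d -> F c < F d -> exists2 k, c <= k < d & F k < F k.+1.
Proof.
elim: d => [|d IH]; first by rewrite leqn0 => /eqP ->; rewrite ltnn.
rewrite leq_eqVlt => /orP [/eqP -> | le_cd lt_F]; first by rewrite ltnn.
case: (ltnP (F d) (F d.+1)) => [lt_d|le_d]; first by exists d => //; lia.
have [k k_cd lt_k] := IH le_cd (leq_trans lt_F le_d).
by exists k => //; lia.
Qed.

Lemma perm_incr_eq1 n (r : 'S_n) :
  (forall a b : 'I_n, val a < val b -> val (r a) < val (r b)) -> r = 1%g.
Proof.
move=> r_incr; apply/permP => c; rewrite perm1.
have sorted_enum : sorted ltn (map val (enum 'I_n)) by rewrite val_enum_ord iota_ltn_sorted.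
have : map val (map r (enum 'I_n)) = map val (enum 'I_n).
  apply: (irr_sorted_eq ltn_trans ltnn) => //.
    rewrite -map_comp; apply: (@homo_sorted _ _ _ (relpre val ltn) _ r_incr).
    by rewrite -sorted_map.
  move=> k; apply/mapP/mapP => [[_ /mapP [d _ ->] ->]|[d _ ->]].
    by exists (r d); rewrite ?mem_enum.
  by exists d => //; apply/mapP; exists ((r^-1)%g d); rewrite ?mem_enum ?permKV.
move=> /(congr1 (nth 0 ^~ (val c))).
by rewrite -map_comp !(nth_map c 0) ?size_enum_ord ?ltn_ord // nth_ord_enum => /val_inj.
Qed.

Lemma invnumV n (s : 'S_n) : invnum (s^-1)%g = invnum s.
Proof.
pose swap (p : 'I_n * 'I_n) := ((s^-1)%g p.2, (s^-1)%g p.1).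
have swap_inj : injective swap by move=> [a b] [c d] [/perm_inj -> /perm_inj ->].
rewrite /invnum -[RHS](card_preimset _ swap_inj); apply: eq_card => -[a b].
by rewrite !inE /= !permKV andbC.
Qed.

Section Diagram.
Variable n : nat.
Implicit Types (f : {ffun 'I_n -> 'I_n}) (a b c x y : 'I_n).

Lemma rowE f a :
  row f a = \sum_c ((val (f c) < val (f a)) + ((f c == f a) && (val c < val a))).
Proof.
rewrite /row big_split /= -!sum1dep_card.
by congr (_ + _); rewrite big_mkcond; apply: eq_bigr => c _; case: ifP.
Qed.

Lemma row_lt_col f a b : val (f a) < val (f b) -> row f a < row f b.
Proof.
move=> lt_ab; rewrite !rowE; apply: (@ltn_sum_ord _ _ _ a) => [c|];
  rewrite -!val_eqE /=; ord_lia.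
Qed.

Lemma row_lt_same_col f a b : f a = f b -> val a < val b -> row f a < row f b.
Proof.
move=> /(congr1 val) e lt_ab; rewrite !rowE; apply: (@ltn_sum_ord _ _ _ a) => [c|];
  rewrite -!val_eqE /=; ord_lia.
Qed.

Lemma row_ltn f a : row f a < n.
Proof.
rewrite -[X in _ < X]card_ord -sum1_card rowE.
by apply: (@ltn_sum_ord _ _ _ a) => [c|]; rewrite -!val_eqE /=; ord_lia.
Qed.

Lemma ltn_row f a b : row f a < row f b ->
  (val (f a) < val (f b)) || ((f a == f b) && (val a < val b)).
Proof.
move=> lt_ab; case: (ltngtP (val (f a)) (val (f b))) => [//|gt_col|eq_col] /=.
  by have := row_lt_col gt_col; lia.
have e : f a = f b by apply: val_inj.
rewrite e eqxx /=; case: (ltngtP (val a) (val b)) => [//|gt_ab|eq_ab].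
  by have := row_lt_same_col (esym e) gt_ab; lia.
by move: lt_ab; rewrite (val_inj eq_ab) ltnn.
Qed.

Lemma row_inj f : injective (row f).
Proof.
move=> a b e_row; apply/eqP; apply: contraT => nab.
case: (ltngtP (val (f a)) (val (f b))) => [lt_col|gt_col|eq_col].
- by have := row_lt_col lt_col; rewrite e_row ltnn.
- by have := row_lt_col gt_col; rewrite e_row ltnn.
have e : f a = f b by apply: val_inj.
case: (ltngtP (val a) (val b)) => [lt_ab|gt_ab|eq_ab].
- by have := row_lt_same_col e lt_ab; rewrite e_row ltnn.
- by have := row_lt_same_col (esym e) gt_ab; rewrite e_row ltnn.
- by move: nab; rewrite (val_inj eq_ab) eqxx.
Qed.

Lemma row_surj f (k : 'I_n) : exists a, row f a = k.
Proof.
have row_ord_inj : injective (fun a => Ordinal (row_ltn f a)).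
  by move=> a b /(congr1 val) /row_inj.
have [g _ gK] := injF_bij row_ord_inj.
by exists (g k); have := gK k => /(congr1 val).
Qed.

Lemma diag_index f c : diag f c = (n%:Z - (n + col f c - row f c)%:Z)%R.
Proof. by rewrite /diag /col; have := row_ltn f c; have := ltn_ord (f c); ord_lia. Qed.

Lemma mem_diaglist f c : diag f c \in diaglist n.
Proof.
apply/mapP; exists (n + col f c - row f c); last exact: diag_index.
by rewrite mem_iota /col; have := row_ltn f c; have := ltn_ord (f c); ord_lia.
Qed.

Lemma index_diaglist_ltn f x y :
  (index (diag f x) (diaglist n) < index (diag f y) (diaglist n)) = (diag f y < diag f x)%R.
Proof.
have index_diag c : index (diag f c) (diaglist n) = n + col f c - row f c.
  rewrite diag_index (index_map (f := fun k : nat => (n%:Z - k%:Z)%R)); last by move=> u v /=; ord_lia.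
  by apply: index_iota0; rewrite /col; have := row_ltn f c; have := ltn_ord (f c); ord_lia.
rewrite !index_diag /diag /col.
by have := row_ltn f x; have := ltn_ord (f x); have := row_ltn f y; have := ltn_ord (f y); ord_lia.
Qed.

Lemma col_neq_same_diag f x y : x != y -> diag f x = diag f y -> col f x != col f y.
Proof.
move=> nxy e_diag; apply/negP => /eqP e_col.
have : row f x != row f y by apply: contra nxy => /eqP /row_inj ->.
by move: e_diag e_col; rewrite /diag /col; ord_lia.
Qed.

Lemma diagword_index_ltn f x y : x != y ->
  (index x (diagword f) < index y (diagword f)) =
  (diag f y < diag f x)%R || ((diag f x == diag f y) && (val x < val y)).
Proof.
move=> nxy; rewrite (@index_flatten_ltn _ _ _ _ (diag f)) ?mem_diaglist //; last first.
  by move=> d z; rewrite mem_filter mem_enum andbT.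
rewrite index_diaglist_ltn; congr (_ || _); case: eqP => //= e.
have sorted_enum : sorted (fun a b : 'I_n => val a < val b) (enum 'I_n).
  by have := iota_ltn_sorted 0 n; rewrite -val_enum_ord sorted_map.
apply: (@sorted_index_ltn _ (fun a b : 'I_n => val a < val b)).
- by move=> a b c _ _ _; apply: ltn_trans.
- by apply: sorted_filter => // a b c; apply: ltn_trans.
- by rewrite mem_filter mem_enum eqxx.
- by rewrite mem_filter mem_enum e eqxx.
- by [].
- by move=> lt_xy; rewrite -leqNgt ltnW.
Qed.

Lemma sigword_index_ltn f x y : x != y ->
  (index x (sigword f) < index y (sigword f)) =
  (diag f y < diag f x)%R || ((diag f x == diag f y) && (col f y < col f x)).
Proof.
move=> nxy; rewrite (@index_flatten_ltn _ _ _ _ (diag f)) ?mem_diaglist //; last first.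
  by move=> d z; rewrite mem_sort mem_filter mem_enum andbT.
rewrite index_diaglist_ltn; congr (_ || _); case: eqP => //= e.
have ne := col_neq_same_diag nxy e.
rewrite (@sorted_index_ltn _ (fun a b : 'I_n => col f b <= col f a)).
- by rewrite leq_eqVlt eq_sym (negPf ne).
- by move=> a b c _ _ _ h1 h2; apply: leq_trans h2 h1.
- by apply: sort_sorted => a b; apply: leq_total.
- by rewrite mem_sort mem_filter mem_enum eqxx.
- by rewrite mem_sort mem_filter mem_enum e eqxx.
- by [].
- by move=> le_yx; rewrite -ltnNge ltn_neqAle le_yx eq_sym ne.
Qed.

Lemma size_sigword f : size (sigword f) = size (diagword f).
Proof.
rewrite !size_flatten /shape -!map_comp; congr sumn.
by apply: eq_map => d /=; rewrite size_sort.
Qed.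

Lemma diag_row_succ f e1 e2 : row f e2 = (row f e1).+1 ->
  (diag f e2 <= diag f e1)%R \/
  [/\ f e1 = f e2, val e1 < val e2 & diag f e2 = (diag f e1 + 1)%R].
Proof.
move=> r2; have := @ltn_row f e1 e2; rewrite r2 ltnSn => /(_ isT).
case/orP => [lt_col|/andP [/eqP fe lt12]].
  by left; move: lt_col; rewrite /diag /col r2; ord_lia.
by right; split=> //; rewrite /diag /col r2 fe; ord_lia.
Qed.

Lemma row_ind f (P : 'I_n -> Prop) :
  (forall e1 e2, P e1 -> row f e2 = (row f e1).+1 -> P e2) ->
  forall m e1 e2, P e1 -> row f e2 = row f e1 + m -> P e2.
Proof.
move=> step; elim=> [|m IH] e1 e2 P1 r2.
  by rewrite (@row_inj f e2 e1) // r2 addn0.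
have lt_mn : row f e1 + m < n by have := row_ltn f e2; ord_lia.
have [e' r'] := row_surj f (Ordinal lt_mn).
by apply: (step e'); [apply: (IH e1) | rewrite r2 r' /=; ord_lia].
Qed.

End Diagram.

Section Blocks.
Variables (n : nat) (tau : 'S_n).
Implicit Types (f g h : {ffun 'I_n -> 'I_n}) (a b c d e u v x y : 'I_n) (s r : 'S_n).

Local Notation w := (oneline tau).
Local Notation G := (Yconsec tau).

(* With 0-based cars: car [k] stands immediately left of car [k.+1] in [tau]. *)
Definition linked k := consec (labels w) k.+1.

Definition same_block u v := sameblock (labels w) (val u).+1 (val v).+1.

Lemma linked_index a b : val b = (val a).+1 -> linked a = (index b w == (index a w).+1).
Proof. by move=> eb; rewrite /linked /consec (index_labels w a) -eb (index_labels w b). Qed.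

Lemma same_blockP u v :
  same_block u v <-> (forall k, minn (val u) (val v) <= k < maxn (val u) (val v) -> linked k).
Proof.
split=> [/allP blk k k_uv | blk]; first by apply: blk; rewrite mem_iota; ord_lia.
apply/allP => m; rewrite mem_iota => m_uv.
have -> : m = (m.-1).+1 by ord_lia.
by apply: blk; ord_lia.
Qed.

Lemma same_block_refl u : same_block u u.
Proof. by apply/same_blockP => k; ord_lia. Qed.

Lemma same_block_sym u v : same_block u v -> same_block v u.
Proof. by move/same_blockP => blk; apply/same_blockP => k k_uv; apply: blk; ord_lia. Qed.

Lemma same_block_trans u v x : same_block u v -> same_block v x -> same_block u x.
Proof.
move=> /same_blockP uv /same_blockP vx; apply/same_blockP => k k_ux.
have : (minn (val u) (val v) <= k < maxn (val u) (val v)) ||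
       (minn (val v) (val x) <= k < maxn (val v) (val x)) by ord_lia.
by case/orP => [/uv|/vx].
Qed.

Lemma same_block_linked a b : val b = (val a).+1 -> linked a -> same_block a b.
Proof. by move=> eb lnk; apply/same_blockP => k k_ab; have -> : k = val a by ord_lia. Qed.

Lemma same_block_ltn u v u' v' : ~~ same_block u v -> val u < val v ->
  same_block u u' -> same_block v v' -> val u' < val v'.
Proof.
move=> /negP nuv lt_uv /same_blockP uu' /same_blockP vv'; rewrite ltnNge; apply/negP => le_vu.
apply: nuv; apply/same_blockP => k k_uv.
by case: (ltnP k (val u')) => k_u'; [apply: uu' | apply: vv']; ord_lia.
Qed.

Definition block_ascents g := [set p : 'I_n * 'I_n |
  [&& same_block p.1 p.2, val p.1 < val p.2 & col g p.1 < col g p.2]].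

Definition canonical g := block_ascents g == set0.

Section Fiber.
Variable f : {ffun 'I_n -> 'I_n}.
Hypothesis f_tau : diagword f = w.

Lemma word_index_ltn x y : x != y ->
  (index x w < index y w) =
  (diag f y < diag f x)%R || ((diag f x == diag f y) && (val x < val y)).
Proof. by rewrite -f_tau; apply: diagword_index_ltn. Qed.

Lemma linked_same_diag a b : val b = (val a).+1 -> diag f a = diag f b -> linked a.
Proof.
move=> eb e_diag; rewrite (linked_index eb).
have nab : a != b by apply/eqP => e; move: eb; rewrite e; ord_lia.
have lt_ab := word_index_ltn nab; rewrite e_diag eqxx eb ltnSn orbT /= in lt_ab.
rewrite eqn_leq lt_ab andbT leqNgt; apply/negP => gap.
have lt_w : (index a w).+1 < size w.
  have : index b w < size w by rewrite index_mem mem_oneline.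
  ord_lia.
set e := nth a w (index a w).+1.
have ie : index e w = (index a w).+1 by apply: index_uniq => //; apply: oneline_uniq.
have nae : a != e by apply/eqP => ea; move: ie; rewrite -ea; lia.
have neb : e != b by apply/eqP => eb'; move: ie gap; rewrite eb'; lia.
have := word_index_ltn nae; have := word_index_ltn neb.
by rewrite ie gap ltnSn e_diag; ord_lia.
Qed.

(* The diagonal rises by at most one from a row to the next, and it cannot reach
   [diag f a] from [diag f a - 1] without a car falling between [a] and [b] in [w]. *)
Lemma diag_below_row_succ a b e1 e2 :
  val b = (val a).+1 -> index b w = (index a w).+1 -> (diag f b < diag f a)%R ->
  (diag f e1 < diag f a)%R -> row f e2 = (row f e1).+1 -> (diag f e2 < diag f a)%R.
Proof.
move=> eb adj_ab lt_ba lt_1a /diag_row_succ [le21|[fe lt12 d2]]; first by ord_lia.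
have no_between e : ~~ ((index a w < index e w) && (index e w < index b w)).
  by rewrite adj_ab; lia.
rewrite d2; case: (boolP (diag f e1 + 1 < diag f a)%R) => // ge.
have d2a : diag f e2 = diag f a by ord_lia.
have le2 : val e2 <= val a.
  rewrite leqNgt; apply/negP => lt_a2.
  have n1 : a != e2 by apply/eqP => e; move: lt_a2; rewrite e ltnn.
  have n2 : e2 != b by apply/eqP => e; move: d2a lt_ba; rewrite e => ->; rewrite Order.POrderTheory.ltxx.
  by have := no_between e2; rewrite (word_index_ltn n1) (word_index_ltn n2) d2a lt_a2 /=; ord_lia.
have ge1 : val b <= val e1.
  rewrite leqNgt; apply/negP => lt_1b.
  have n1 : a != e1 by apply/eqP => e; move: lt_1a; rewrite -e Order.POrderTheory.ltxx.
  have n2 : e1 != b by apply/eqP => e; move: lt_1b; rewrite e ltnn.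
  by have := no_between e1; rewrite (word_index_ltn n1) (word_index_ltn n2) lt_1b /=; ord_lia.
by ord_lia.
Qed.

(* Propagate [diag _ < diag f a] upwards, from the lowest row or from [b]: the
   lowest row has diagonal [<= 0] and the highest one [>= 0]. *)
Lemma diag_eq_linked a b : val b = (val a).+1 -> linked a -> diag f a = diag f b.
Proof.
move=> eb; rewrite (linked_index eb) => /eqP adj_ab.
apply/eqP; apply: contraT => ne_diag.
have nab : a != b by apply/eqP => e; move: eb; rewrite e; ord_lia.
have lt_ba : (diag f b < diag f a)%R.
  by move: (word_index_ltn nab); rewrite adj_ab ltnSn (negPf ne_diag) andFb orbF => <-.
pose P e := (diag f e < diag f a)%R.
have P_up e1 e2 : P e1 -> row f e2 = (row f e1).+1 -> P e2 := diag_below_row_succ eb adj_ab lt_ba.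
have n_gt0 : 0 < n by have := ltn_ord a; ord_lia.
have [e0 r0] := row_surj f (Ordinal n_gt0).
have lt_pred : n.-1 < n by ord_lia.
have [eN rN] := row_surj f (Ordinal lt_pred).
have d0 : (diag f e0 <= 0)%R by rewrite /diag r0 /=; ord_lia.
have dN : (0 <= diag f eN)%R by rewrite /diag rN /col /=; have := ltn_ord (f eN); ord_lia.
case: (boolP (P e0)) => P0.
  have := @row_ind _ f P P_up (row f a) e0 a P0; rewrite r0 /= add0n => /(_ erefl).
  by rewrite /P; ord_lia.
have := @row_ind _ f P P_up (n.-1 - row f b) b eN lt_ba.
rewrite rN /= subnKC; last by have := row_ltn f b; ord_lia.
by move=> /(_ erefl); move: P0 d0 dN; rewrite /P; ord_lia.
Qed.

Lemma same_block_diag u v : same_block u v -> diag f u = diag f v.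
Proof.
have diag_run m u' v' : val v' = val u' + m ->
    (forall k, val u' <= k < val v' -> linked k) -> diag f u' = diag f v'.
  elim: m u' v' => [|m IH] u' v' e lnk.
    by have -> : v' = u' by apply: val_inj; rewrite e addn0.
  have lt_mn : val u' + m < n by have := ltn_ord v'; ord_lia.
  rewrite (IH u' (Ordinal lt_mn)) //=; last by move=> k k_m; apply: lnk; ord_lia.
  by apply: diag_eq_linked => /=; [ord_lia | apply: lnk; ord_lia].
move=> /same_blockP blk; case: (leqP (val u) (val v)) => le_uv.
  by apply: (diag_run (val v - val u)) => [|k k_uv]; [|apply: blk]; ord_lia.
by apply/esym; apply: (diag_run (val u - val v)) => [|k k_vu]; [|apply: blk]; ord_lia.
Qed.

Lemma col_neq_same_block u v : same_block u v -> u != v -> f u != f v.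
Proof.
move=> blk nuv; apply/eqP => e.
by have := col_neq_same_diag nuv (same_block_diag blk); rewrite /col e eqxx.
Qed.

Lemma canonical_ltn c d : canonical f -> same_block c d -> val c < val d -> col f d < col f c.
Proof.
move=> /eqP can blk lt_cd; have : (c, d) \notin block_ascents f by rewrite can inE.
rewrite inE /= blk lt_cd /= -leqNgt leq_eqVlt => /orP [/eqP e_col|//].
have ncd : c != d by apply: contraTneq lt_cd => ->; rewrite ltnn.
by have := col_neq_same_block blk ncd; rewrite -val_eqE; move: e_col; rewrite /col => ->; rewrite eqxx.
Qed.

End Fiber.

Lemma mem_Yconsec s : (s \in G) = [forall c, same_block c (s c)].
Proof. by rewrite inE. Qed.

Lemma Yconsec_same_block s c : s \in G -> same_block c (s c).
Proof. by rewrite mem_Yconsec => /forallP. Qed.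

Lemma Yconsec_group_set : group_set G.
Proof.
apply/group_setP; split=> [|s r sG rG]; rewrite mem_Yconsec; apply/forallP => c.
  by rewrite perm1 same_block_refl.
by rewrite permM; exact: same_block_trans (Yconsec_same_block c sG) (Yconsec_same_block _ rG).
Qed.

Canonical Yconsec_group := Group Yconsec_group_set.

Lemma same_block_perm s u v : s \in G -> same_block (s u) (s v) = same_block u v.
Proof.
move=> sG; have blk := Yconsec_same_block _ sG; apply/idP/idP => uv.
  exact: same_block_trans (blk u) (same_block_trans uv (same_block_sym (blk v))).
exact: same_block_trans (same_block_sym (blk u)) (same_block_trans uv (blk v)).
Qed.

Lemma tperm_Yconsec a b : val b = (val a).+1 -> linked a -> tperm a b \in G.
Proof.
move=> eb lnk; rewrite mem_Yconsec; apply/forallP => c.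
case: tpermP => [->|->|_ _]; last exact: same_block_refl.
  exact: same_block_linked.
exact: same_block_sym (same_block_linked eb lnk).
Qed.

Lemma Yconsec_ltn s u v : s \in G -> ~~ same_block u v ->
  (val (s u) < val (s v)) = (val u < val v).
Proof.
move=> sG nuv; have blk := Yconsec_same_block _ sG; apply/idP/idP => [lt_s|].
  case: (ltngtP (val u) (val v)) => // [gt_uv|/val_inj euv].
    have nvu : ~~ same_block v u by apply: contra nuv; apply: same_block_sym.
    by have := same_block_ltn nvu gt_uv (blk v) (blk u); ord_lia.
  by move: nuv; rewrite euv same_block_refl.
by move=> lt_uv; exact: same_block_ltn nuv lt_uv (blk u) (blk v).
Qed.

Definition relabel f s : {ffun 'I_n -> 'I_n} := [ffun c => f (s c)].

Lemma col_relabel f s c : col (relabel f s) c = col f (s c).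
Proof. by rewrite /col ffunE. Qed.

Lemma relabelM f s r : relabel (relabel f s) r = relabel f (r * s)%g.
Proof. by apply/ffunP => c; rewrite !ffunE permM. Qed.

Lemma relabel1 f : relabel f 1%g = f.
Proof. by apply/ffunP => c; rewrite ffunE perm1. Qed.

Section Relabel.
Variables (f : {ffun 'I_n -> 'I_n}) (s : 'S_n).
Hypotheses (f_tau : diagword f = w) (sG : s \in G).

Lemma row_relabel c : row (relabel f s) c = row f (s c).
Proof.
rewrite !rowE [RHS](reindex_inj (@perm_inj _ s)) /=; apply: eq_bigr => c' _.
rewrite !ffunE; congr (_ + _).
case: (eqVneq c' c) => [->|ncc]; first by rewrite !ltnn !andbF.
case: (boolP (same_block c' c)) => [blk|nblk]; last by rewrite Yconsec_ltn.
suff /negbTE -> : f (s c') != f (s c) by [].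
by apply: col_neq_same_block; rewrite ?same_block_perm ?(inj_eq (@perm_inj _ s)).
Qed.

Lemma diag_relabel c : diag (relabel f s) c = diag f (s c).
Proof. by rewrite /diag col_relabel row_relabel. Qed.

Lemma diagword_relabel : diagword (relabel f s) = diagword f.
Proof.
congr flatten; apply: eq_map => d; apply: eq_filter => c.
by rewrite diag_relabel -(same_block_diag f_tau (Yconsec_same_block c sG)).
Qed.

Lemma dev_relabel : dev (relabel f s) = dev f.
Proof.
rewrite /dev; under eq_bigr => c _ do rewrite col_relabel row_relabel.
by rewrite [RHS](reindex_inj (@perm_inj _ s)).
Qed.

Lemma area_relabel : area (relabel f s) = area f.
Proof.
rewrite /area dev_relabel; under eq_bigr => c _ do rewrite col_relabel row_relabel.
by rewrite [RHS](reindex_inj (@perm_inj _ s)).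
Qed.

Let spair (p : 'I_n * 'I_n) := (s p.1, s p.2).

Let spair_inj : injective spair.
Proof. by move=> [a b] [c d] [/perm_inj -> /perm_inj ->]. Qed.

Lemma card_neg_diag_relabel :
  #|[set c | (diag (relabel f s) c < 0)%R]| = #|[set c | (diag f c < 0)%R]|.
Proof.
rewrite -[RHS](card_preimset _ (@perm_inj _ s)); apply: eq_card => c.
by rewrite !inE diag_relabel.
Qed.

Lemma card_next_diag_inv_relabel :
  #|[set p : 'I_n * 'I_n | [&& val p.2 < val p.1,
      diag (relabel f s) p.1 == (diag (relabel f s) p.2 + 1)%R
    & col (relabel f s) p.1 < col (relabel f s) p.2]]| =
  #|[set p : 'I_n * 'I_n | [&& val p.2 < val p.1,
      diag f p.1 == (diag f p.2 + 1)%R & col f p.1 < col f p.2]]|.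
Proof.
rewrite -[RHS](card_preimset _ spair_inj); apply: eq_card => [[a b]].
rewrite !inE /= !diag_relabel !col_relabel.
case: (eqVneq (diag f (s a)) (diag f (s b) + 1)%R) => e_diag; rewrite ?andbF //=.
suff nba : ~~ same_block b a by rewrite Yconsec_ltn.
apply/negP => blk; move: e_diag.
by rewrite (same_block_diag f_tau (_ : same_block (s b) (s a))) ?same_block_perm //; lia.
Qed.

Hypothesis f_can : canonical f.

(* Split the pairs according to whether they lie in a common block: [s] permutes
   the pairs outside blocks, and inside blocks the canonical [f] contributes
   nothing while [relabel f s] contributes exactly the inversions of [s]. *)
Lemma card_same_diag_inv_relabel :
  #|[set p : 'I_n * 'I_n | [&& diag (relabel f s) p.1 == diag (relabel f s) p.2,
      col (relabel f s) p.1 < col (relabel f s) p.2 & val p.1 < val p.2]]| =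
  #|[set p : 'I_n * 'I_n | [&& diag f p.1 == diag f p.2,
      col f p.1 < col f p.2 & val p.1 < val p.2]]| + invnum s.
Proof.
set A := fun g : {ffun 'I_n -> 'I_n} => [set p : 'I_n * 'I_n |
  [&& diag g p.1 == diag g p.2, col g p.1 < col g p.2 & val p.1 < val p.2]].
set B := [set p : 'I_n * 'I_n | same_block p.1 p.2].
rewrite -(cardsID B (A (relabel f s))) -(cardsID B (A f)).
have out_blocks : A (relabel f s) :\: B = spair @^-1: (A f :\: B).
  apply/setP => [[a b]]; rewrite !inE /= same_block_perm //.
  case: (boolP (same_block a b)) => blk; rewrite ?andbF //=.
  by rewrite !diag_relabel !col_relabel Yconsec_ltn.
have in_blocks_can : A f :&: B = set0.
  apply/setP => [[a b]]; rewrite !inE /=.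
  case: (boolP (same_block a b)) => blk; rewrite ?andbF //=.
  case: (boolP (val a < val b)) => lt_ab; rewrite ?andbF //=.
  by have := canonical_ltn f_tau f_can blk lt_ab; rewrite andbT; lia.
have in_blocks : A (relabel f s) :&: B =
    [set p : 'I_n * 'I_n | (val p.1 < val p.2) && (val (s p.2) < val (s p.1))].
  apply/setP => [[a b]]; rewrite !inE /= !diag_relabel !col_relabel.
  case: (boolP (same_block a b)) => blk; last first.
    have nba : ~~ same_block b a by apply: contra blk; apply: same_block_sym.
    by rewrite andbF (Yconsec_ltn sG nba); ord_lia.
  have sblk : same_block (s a) (s b) by rewrite same_block_perm.
  rewrite andbT (same_block_diag f_tau sblk) eqxx /=.
  case: (boolP (val a < val b)) => lt_ab; rewrite ?andbF ?andbT //=.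
  have nab : s a != s b by rewrite (inj_eq (@perm_inj _ s)); apply: contraTneq lt_ab => ->; rewrite ltnn.
  case: (ltngtP (val (s a)) (val (s b))) => [lt_s|gt_s|/val_inj e_s].
  - by have := canonical_ltn f_tau f_can sblk lt_s; lia.
  - by rewrite (canonical_ltn f_tau f_can (same_block_sym sblk) gt_s).
  - by rewrite e_s eqxx in nab.
by rewrite out_blocks card_preimset // in_blocks_can cards0 in_blocks /invnum; lia.
Qed.

Lemma dinv_relabel : dinv (relabel f s) = dinv f + invnum s.
Proof.
rewrite /dinv card_same_diag_inv_relabel card_next_diag_inv_relabel card_neg_diag_relabel.
by rewrite [_ + invnum s + _]addnAC [LHS]addnAC.
Qed.

Lemma ides_sigword_relabel a b : val b = (val a).+1 ->
  (val b \in ides (labels (sigword (relabel f s)))) =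
  (val b \in ides (labels w) ++ ides (labels (oneline (s^-1)%g))).
Proof.
move=> eb; have fs_tau : diagword (relabel f s) = w by rewrite diagword_relabel.
rewrite mem_cat !(mem_ides_labels _ eb) ?size_oneline ?size_sigword ?fs_tau ?size_oneline //.
rewrite !(index_oneline (s^-1)%g) invgK.
have nba : b != a by apply/eqP => e; move: eb; rewrite e; ord_lia.
rewrite (sigword_index_ltn _ nba) (word_index_ltn fs_tau nba) !col_relabel.
have -> : (val b < val a) = false by apply/negbTE; rewrite -leqNgt eb.
rewrite andbF orbF.
case: (eqVneq (diag (relabel f s) b) (diag (relabel f s) a)) => e_diag.
  have sblk : same_block (s a) (s b).
    by rewrite same_block_perm //; apply: same_block_linked eb (linked_same_diag fs_tau eb _).
  rewrite e_diag Order.POrderTheory.ltxx /=.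
  case: (ltngtP (val (s a)) (val (s b))) => [lt_s|gt_s|/val_inj/perm_inj e_ab].
  - by rewrite ltnNge (ltnW (canonical_ltn f_tau f_can sblk lt_s)).
  - by rewrite (canonical_ltn f_tau f_can (same_block_sym sblk) gt_s).
  - by rewrite e_ab eqxx in nba.
rewrite andFb !orbF.
have nblk : ~~ same_block a b.
  apply: contra e_diag => blk; rewrite !diag_relabel (same_block_diag f_tau (_ : same_block (s b) (s a))) //.
  by rewrite same_block_perm //; apply: same_block_sym.
have := Yconsec_ltn sG nblk; rewrite eb ltnSn => lt_s.
by rewrite ltnNge (ltnW lt_s) orbF.
Qed.

Lemma Qeval_sigword_relabel (R : comNzRingType) N (x : 'I_N -> R) :
  Qeval n (ides (labels (sigword (relabel f s)))) x =
  Qeval n (ides (labels w) ++ ides (labels (oneline (s^-1)%g))) x.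
Proof.
apply: eq_Qeval => i /andP [i_gt0 lt_i].
have lt_pred : i.-1 < n by lia.
by have := @ides_sigword_relabel (Ordinal lt_pred) (Ordinal lt_i); rewrite /= prednK // => /(_ erefl).
Qed.

End Relabel.

Lemma canonical_relabel_eq1 h r : diagword h = w -> canonical h -> canonical (relabel h r) ->
  r \in G -> r = 1%g.
Proof.
move=> h_tau h_can hr_can rG; apply: perm_incr_eq1 => a b lt_ab.
case: (boolP (same_block a b)) => [blk|nblk]; last by rewrite Yconsec_ltn.
have hr_tau : diagword (relabel h r) = w by rewrite diagword_relabel.
have := canonical_ltn hr_tau hr_can blk lt_ab; rewrite !col_relabel => lt_col.
have sblk : same_block (r a) (r b) by rewrite same_block_perm.
case: (ltngtP (val (r a)) (val (r b))) => [//|gt_r|/val_inj/perm_inj e_ab].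
  by have := canonical_ltn h_tau h_can (same_block_sym sblk) gt_r; ord_lia.
by move: lt_ab; rewrite e_ab ltnn.
Qed.

Lemma adjacent_ascent g : ~~ canonical g ->
  exists a b, [/\ val b = (val a).+1, linked a & col g a < col g b].
Proof.
case/set0Pn => -[c d]; rewrite inE /= => /and3P [blk lt_cd lt_col].
pose F k := col g (insubd c k).
have [k /andP [le_ck lt_kd] lt_F] : exists2 k, val c <= k < val d & F k < F k.+1.
  by apply: exists_ascent; rewrite /F ?insubdT ?valKd //; ord_lia.
have lt_kn : k.+1 < n by have := ltn_ord d; ord_lia.
exists (insubd c k), (insubd c k.+1); rewrite !val_insubd lt_kn (ltnW lt_kn); split=> //.
by move/same_blockP: blk; apply; ord_lia.
Qed.

Lemma card_ascents_tperm g a b : val b = (val a).+1 -> linked a -> col g a < col g b ->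
  #|block_ascents (relabel g (tperm a b))| < #|block_ascents g|.
Proof.
move=> eb lnk lt_col; pose tt p := (tperm a b p.1, tperm a b p.2).
have tt_inj : injective tt by move=> [x y] [x' y'] [/perm_inj -> /perm_inj ->].
have ab_asc : (a, b) \in block_ascents g by rewrite inE /= same_block_linked // lt_col eb ltnSn.
rewrite -(card_imset _ tt_inj) (cardsD1 (a, b) (block_ascents g)) ab_asc add1n ltnS.
apply/subset_leq_card/subsetP => _ /imsetP [[x y] + ->]; rewrite !inE /= !col_relabel.
case/and3P => blk lt_xy lt_col_xy.
have nxy : ~~ ((x == a) && (y == b)).
  by apply/negP => /andP [/eqP ex /eqP ey]; move: lt_col_xy; rewrite ex ey tpermL tpermR; ord_lia.
rewrite same_block_perm ?tperm_Yconsec // blk tperm_succ_ltn // lt_col_xy !andbT.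
rewrite /tt xpair_eqE; apply/negP => /andP [/eqP e1 /eqP e2].
have [ex ey] : x = b /\ y = a by rewrite -(tpermK a b x) -(tpermK a b y) e1 e2 tpermL tpermR.
by move: lt_xy; rewrite ex ey eb; ord_lia.
Qed.

Lemma exists_canonical_relabel f : exists2 s, s \in G & canonical (relabel f s).
Proof.
have [s sG min_s] := @arg_minnP _ 1%g (mem G) (fun s => #|block_ascents (relabel f s)|) (group1 _).
exists s => //; apply: contraT => /adjacent_ascent [a [b [eb lnk lt_col]]].
have := min_s _ (groupM (tperm_Yconsec eb lnk) sG); rewrite -relabelM => le_s.
by have := leq_ltn_trans le_s (card_ascents_tperm eb lnk lt_col); rewrite ltnn.
Qed.

Definition canonical_fiber l := [set h | [&& diagword h == w, dev h == l & canonical h]].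

Lemma canonical_fiberP l h :
  reflect [/\ diagword h = w, dev h = l & canonical h] (h \in canonical_fiber l).
Proof. by rewrite inE; apply: (iffP and3P) => -[/eqP ? /eqP ? ?]; split=> //; apply/eqP. Qed.

Lemma sum_fiber_orbits (R : nmodType) l (H : {ffun 'I_n -> 'I_n} -> R) :
  (\sum_(f | (diagword f == w) && (dev f == l)) H f =
   \sum_(h in canonical_fiber l) \sum_(s in G) H (relabel h s))%R.
Proof.
pose act p := relabel p.1 p.2.
have act_inj : {in setX (canonical_fiber l) G &, injective act}.
  move=> [h s] [h' s']; rewrite !in_setX /act /=.
  move=> /andP [/canonical_fiberP [h_tau _ h_can] sG] /andP [/canonical_fiberP [h'_tau _ h'_can] s'G] e.
  have eh : h = relabel h' (s^-1 * s')%g by rewrite -relabelM -e relabelM mulVg relabel1.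
  have e1 : (s^-1 * s')%g = 1%g.
    apply: (canonical_relabel_eq1 h'_tau h'_can); first by rewrite -eh.
    exact: groupM (groupVr sG) s'G.
  have es : s' = s by rewrite -[s'](mulVKg s) e1 mulg1.
  by rewrite eh e1 relabel1 es.
have act_S : act @: setX (canonical_fiber l) G = [set f | (diagword f == w) && (dev f == l)].
  apply/setP => f; rewrite inE; apply/imsetP/idP.
    move=> [[h s]]; rewrite in_setX /act /= => /andP [/canonical_fiberP [h_tau h_l _] sG] ->.
    by rewrite diagword_relabel // dev_relabel // h_tau h_l !eqxx.
  case/andP => /eqP f_tau /eqP f_l; have [s sG fs_can] := exists_canonical_relabel f.
  exists (relabel f s, (s^-1)%g); last by rewrite /act /= relabelM mulVg relabel1.
  rewrite in_setX groupV sG andbT; apply/canonical_fiberP.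
  by rewrite diagword_relabel // dev_relabel.
transitivity (\sum_(f in act @: setX (canonical_fiber l) G) H f)%R.
  by apply: eq_bigl => f; rewrite act_S inE.
by rewrite big_imset //= pair_big; apply: eq_bigl => -[h s]; rewrite in_setX.
Qed.

Section OrbitWeights.
Variables (R : comNzRingType) (q t : R) (h : {ffun 'I_n -> 'I_n}).
Hypotheses (h_tau : diagword h = w) (h_can : canonical h).

Lemma weight_relabel s : s \in G ->
  (t ^+ area (relabel h s) * q ^+ dinv (relabel h s) =
   t ^+ area h * q ^+ dinv h * q ^+ invnum s)%R.
Proof. by move=> sG; rewrite area_relabel // dinv_relabel // exprD mulrA. Qed.

Lemma sum_orbit_weight :
  (\sum_(s in G) t ^+ area (relabel h s) * q ^+ dinv (relabel h s) =
   t ^+ area h * q ^+ dinv h * \sum_(pi in G) q ^+ invnum pi)%R.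
Proof. by rewrite big_distrr; apply: eq_bigr => s sG; rewrite weight_relabel. Qed.

Lemma sum_orbit_weight_Qeval N (x : 'I_N -> R) :
  (\sum_(s in G) t ^+ area (relabel h s) * q ^+ dinv (relabel h s)
     * Qeval n (ides (labels (sigword (relabel h s)))) x =
   t ^+ area h * q ^+ dinv h
     * \sum_(pi in G) q ^+ invnum pi * Qeval n (ides (labels w) ++ ides (labels (oneline pi))) x)%R.
Proof.
rewrite big_distrr (reindex_inj invg_inj) /=.
apply: eq_big => [s|s sVG]; first by rewrite groupV.
by rewrite weight_relabel // Qeval_sigword_relabel // invnumV invgK !mulrA.
Qed.

End OrbitWeights.

End Blocks.

Theorem lemma4p1 (F : fieldType) (n l : nat) (tau : 'S_n) (N : nat)
    (q t : F) (x : 'I_N -> F) :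
  l.+1 <= nruns (labels (oneline tau)) ->
  (\sum_(pi in Yconsec tau) q ^+ invnum pi != 0)%R ->
  (\sum_(f : {ffun 'I_n -> 'I_n} | (diagword f == oneline tau) && (dev f == l))
      t ^+ area f * q ^+ dinv f * Qeval n (ides (labels (sigword f))) x)%R
  = ((\sum_(f : {ffun 'I_n -> 'I_n} | (diagword f == oneline tau) && (dev f == l))
        t ^+ area f * q ^+ dinv f)
     * ((\sum_(pi in Yconsec tau)
           q ^+ invnum pi
           * Qeval n (ides (labels (oneline tau)) ++ ides (labels (oneline pi))) x)
        / (\sum_(pi in Yconsec tau) q ^+ invnum pi)))%R.
Proof.
move=> _ sumG_neq0; rewrite !sum_fiber_orbits.
under eq_bigr => h /canonical_fiberP [h_tau _ h_can] do
  rewrite (sum_orbit_weight_Qeval q t h_tau h_can x).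
under [in RHS]eq_bigr => h /canonical_fiberP [h_tau _ h_can] do
  rewrite (sum_orbit_weight q t h_tau h_can).
by rewrite -!big_distrl /= mulrCA mulfK // mulrC.
Qed.
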